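(* Let $d\ge1$ and let $\Sigma$ be a $d$-dimensional pseudomanifold such that $\tilde H_{d-1}(\Sigma;\mathbb{Z})=0$. Then $K_{d-1}(\Sigma)$ is a cyclic group; more precisely, for any facet $\sigma$ of $\Sigma$, the class of $\partial_d\sigma$ generates $K_{d-1}(\Sigma)$.
   Context: A $d$-dimensional pseudomanifold is a pure $d$-dimensional simplicial complex in which every $(d-1)$-dimensional face (ridge) is contained in at most two $d$-dimensional faces (facets), and which is strongly connected: for any two facets $\sigma,\sigma'$ there is a sequence of facets $\sigma=\sigma_0,\dots,\sigma_k=\sigma'$ with $\sigma_j$ and $\sigma_{j+1}$ sharing a ridge. $C_i(\Sigma;\mathbb{Z})$ is free abelian on the (fixed-orientation) $i$-faces, $\partial_i$ the simplicial boundary map, $\partial^*_i$ its transpose, $\tilde H$ reduced homology. The critical group is $K_i(\Sigma)=\ker\partial_i/\operatorname{im}(\partial_{i+1}\partial^*_{i+1})$. *)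

From HB Require Import structures.
From mathcomp Require Import all_boot all_order all_algebra.
Set Implicit Arguments. Unset Strict Implicit. Unset Printing Implicit Defensive.
Import Order.TTheory GRing.Theory Num.Theory.
Local Open Scope ring_scope.

(* A face of dimension i is a set of size i+1; the
   empty face (dimension -1) gives the augmentation, i.e. reduced chains. *)
Definition is_complex (n : nat) (D : {set {set 'I_n}}) : Prop :=
  forall s t : {set 'I_n}, s \in D -> t \subset s -> t \in D.

Definition is_facet (n d : nat) (D : {set {set 'I_n}}) (s : {set 'I_n}) : bool :=
  (s \in D) && (#|s| == d.+1)%N.

Definition is_pseudomanifold (n d : nat) (D : {set {set 'I_n}}) : Prop :=
  [/\ is_complex D,
      (exists s, is_facet d D s),
      (forall s, s \in D -> exists2 f, is_facet d D f & s \subset f),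
      (forall r, r \in D -> #|r| = d ->
          (#|[set f | is_facet d D f & r \subset f]| <= 2)%N) &
      (forall s s', is_facet d D s -> is_facet d D s' ->
         exists p : seq {set 'I_n},
           [/\ all (is_facet d D) p,
               path (fun a b => #|a :&: b| == d)%N s p & last s p = s'])].

Definition chain (n : nat) := {set 'I_n} -> int.

(* c is a chain of C_{k-1}(D), i.e. supported on the faces of size k *)
Definition is_chain (n : nat) (D : {set {set 'I_n}}) (k : nat) (c : chain n) : Prop :=
  forall s, c s != 0 -> s \in D /\ #|s| = k.

(* orientation sign of removing vertex v from face s (vertices ordered by
   their labels): (-1)^(position of v in s) *)
Definition ssign (n : nat) (s : {set 'I_n}) (v : 'I_n) : int :=
  (-1) ^+ #|[set u in s | (u < v)%N]|.

Definition bd (n : nat) (c : chain n) : chain n :=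
  fun t => \sum_(v : 'I_n | v \notin t) ssign (v |: t) v * c (v |: t).

(* transpose of the boundary C_k -> C_{k-1}, landing in chains on the
   faces of size k of D *)
Definition cobd (n : nat) (D : {set {set 'I_n}}) (k : nat) (c : chain n) : chain n :=
  fun s => if (s \in D) && (#|s| == k)%N
           then \sum_(v in s) ssign s v * c (s :\ v) else 0.

Definition elem (n : nat) (s : {set 'I_n}) : chain n := fun t => (t == s)%:Z.

Definition reduced_homology_vanishes (n : nat) (D : {set {set 'I_n}}) (k : nat) : Prop :=
  forall c, is_chain D k c -> (forall t, bd c t = 0) ->
    exists2 b, is_chain D k.+1 b & forall t, bd b t = c t.

From HB Require Import structures.
From mathcomp Require Import all_boot all_order all_algebra ring.
Import GRing.Theory.
Local Open Scope ring_scope.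

(* Since the (d-1)-cycle x is a boundary, x = bd b for a d-chain b, so it is
   enough to show that every d-chain is m [sigma] plus a coboundary of a
   (d-1)-chain.  If two facets g, g' share the ridge r, then r lies in no
   other facet, so the coboundary of [r] is e [g] + e' [g'] with e, e' = +-1;
   hence [g'] is congruent to -e e' [g] modulo coboundaries.  Strong
   connectivity carries this from sigma to every facet. *)

Set Implicit Arguments.
Unset Strict Implicit.

Section ChainAlgebra.
Variable n : nat.
Implicit Types (c z : chain n) (r s t : {set 'I_n}).

Lemma ssign_sqr s v : ssign s v * ssign s v = 1.
Proof. by rewrite /ssign -exprD -signr_odd oddD addbb. Qed.

Lemma bd_lin (a : int) c1 c2 t :
  bd (fun u => a * c1 u + c2 u) t = a * bd c1 t + bd c2 t.
Proof.
rewrite /bd mulr_sumr -big_split; apply: eq_bigr => v _.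
by rewrite mulrDr mulrCA.
Qed.

Lemma cobd_lin (D : {set {set 'I_n}}) k (a b : int) z1 z2 s :
  cobd D k (fun t => a * z1 t + b * z2 t) s = a * cobd D k z1 s + b * cobd D k z2 s.
Proof.
rewrite /cobd; case: ifP => _; last by rewrite !mulr0 addr0.
rewrite !mulr_sumr -big_split; apply: eq_bigr => v _.
by rewrite mulrDr mulrCA [_ * (b * _)]mulrCA.
Qed.

Lemma cobd0 (D : {set {set 'I_n}}) k s : cobd D k (fun=> 0) s = 0.
Proof. by rewrite /cobd; case: ifP => // _; rewrite big1 // => v _; rewrite mulr0. Qed.

Lemma elem_id s : elem s s = 1.
Proof. by rewrite /elem eqxx. Qed.

Lemma elem_neq s t : t != s -> elem s t = 0.
Proof. by rewrite /elem => /negbTE->. Qed.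

Lemma elem_neq0 s t : elem s t != 0 -> t = s.
Proof. by case: (eqVneq t s) => // /elem_neq->; rewrite eqxx. Qed.

Lemma elem_cobd_out (D : {set {set 'I_n}}) k r t :
  ~~ (r \subset t) -> cobd D k (elem r) t = 0.
Proof.
move=> rt; rewrite /cobd; case: ifP => // _; apply: big1 => v _.
rewrite /elem; suff /negbTE-> : t :\ v != r by rewrite mulr0.
by apply: contraNneq rt => <-; rewrite subD1set.
Qed.

Lemma setD1_codim1 r s : r \subset s -> #|s| = #|r|.+1 ->
  exists2 u, u \in s & s :\ u = r.
Proof.
move=> rs card_s; have /cards1P[u su] : #|s :\: r| == 1%N.
  by rewrite (cardsDS rs) card_s subSnn.
have us : u \in s by have := set11 u; rewrite -su => /setDP[].
exists u => //; rewrite -su setDDr setDv set0U; exact/setIidPr.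
Qed.

Lemma elem_cobd_codim1_sqr (D : {set {set 'I_n}}) r s :
  s \in D -> r \subset s -> #|s| = #|r|.+1 ->
  cobd D #|s| (elem r) s * cobd D #|s| (elem r) s = 1.
Proof.
move=> sD rs card_s; have [u us su] := setD1_codim1 rs card_s.
rewrite /cobd sD eqxx (bigD1 u) //= big1 ?addr0.
  by rewrite /elem su eqxx mulr1 ssign_sqr.
move=> v /andP[vs vu]; rewrite /elem; suff /negbTE-> : s :\ v != r by rewrite mulr0.
apply: contra_neq vu => svr; have : u \notin s :\ v by rewrite svr -su setD11.
by rewrite !inE us andbT negbK => /eqP->.
Qed.

Lemma chain_sum_elem c t : c t = \sum_(s | c s != 0) c s * elem s t.
Proof.
have [ct0|ctN0] := eqVneq (c t) 0.
  rewrite ct0 big1 // => s cs; have [ts|/elem_neq->] := eqVneq t s.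
    by rewrite -ts ct0 eqxx in cs.
  by rewrite mulr0.
rewrite (bigD1 t) //= elem_id mulr1 big1 ?addr0 // => s /andP[_ st].
by rewrite elem_neq ?mulr0 // eq_sym.
Qed.

End ChainAlgebra.

Section CyclicQuotient.
Variables (n d : nat) (D : {set {set 'I_n}}) (sigma : {set 'I_n}).

Definition in_sigma_span (c : chain n) : Prop :=
  exists (m : int) (z : chain n), is_chain D d z /\
    forall t, c t = m * elem sigma t + cobd D d.+1 z t.

Lemma in_sigma_span_ext (c c' : chain n) :
  in_sigma_span c -> (forall t, c t = c' t) -> in_sigma_span c'.
Proof. by move=> [m [z [zD cE]]] cc'; exists m, z; split=> // t; rewrite -cc'. Qed.

Lemma in_sigma_span_lin (a b : int) c1 c2 :
  in_sigma_span c1 -> in_sigma_span c2 ->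
  in_sigma_span (fun t => a * c1 t + b * c2 t).
Proof.
move=> [m1 [z1 [z1D E1]]] [m2 [z2 [z2D E2]]].
exists (a * m1 + b * m2), (fun t => a * z1 t + b * z2 t); split=> [s|t].
  have [z1s0|/z1D//] := eqVneq (z1 s) 0; have [z2s0|/z2D//] := eqVneq (z2 s) 0.
  by rewrite z1s0 z2s0 !mulr0 addr0 eqxx.
rewrite cobd_lin E1 E2; ring.
Qed.

Lemma in_sigma_span_sum (r : seq {set 'I_n}) (P : pred {set 'I_n})
    (F : {set 'I_n} -> chain n) :
  (forall s, P s -> in_sigma_span (F s)) ->
  in_sigma_span (fun t => \sum_(s <- r | P s) F s t).
Proof.
move=> spanF; elim: r => [|s r IH].
  exists 0, (fun=> 0); split=> [s|t]; first by rewrite eqxx.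
  by rewrite big_nil cobd0 mul0r addr0.
case: (boolP (P s)) => Ps.
  apply: (in_sigma_span_ext (in_sigma_span_lin 1 1 (spanF s Ps) IH)) => t.
  by rewrite big_cons Ps !mul1r.
by apply: (in_sigma_span_ext IH) => t; rewrite big_cons (negbTE Ps).
Qed.

Lemma in_sigma_span_sigma : in_sigma_span (elem sigma).
Proof.
by exists 1, (fun=> 0); split=> [s|t]; rewrite ?eqxx // cobd0 mul1r addr0.
Qed.

Lemma in_sigma_span_cobd r :
  r \in D -> #|r| = d -> in_sigma_span (cobd D d.+1 (elem r)).
Proof.
move=> rD card_r; exists 0, (elem r); split=> [s|t]; last by rewrite mul0r add0r.
by move=> /elem_neq0->.
Qed.

Hypothesis DP : is_pseudomanifold d D.

Lemma ridge_two_cofaces g g' r t :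
  is_facet d D g -> is_facet d D g' -> g != g' -> r \in D -> #|r| = d ->
  r \subset g -> r \subset g' -> is_facet d D t -> r \subset t ->
  (t == g) || (t == g').
Proof.
case: DP => _ _ _ ridge_le2 _ fg fg' gg' rD card_r rg rg' ft rt.
apply: contraLR (ridge_le2 r rD card_r); rewrite negb_or => /andP[tg tg'].
rewrite -ltnNge; apply: leq_trans (subset_leq_card (_ : [set g; g'; t] \subset _)).
  by rewrite -setUA !cardsU1 !inE negb_or gg' eq_sym tg eq_sym tg' cards1.
by apply/subsetP => w; rewrite !inE => /orP[/orP[]|] /eqP->; apply/andP.
Qed.

Lemma in_sigma_span_adjacent g g' :
  is_facet d D g -> is_facet d D g' -> #|g :&: g'| = d ->
  in_sigma_span (elem g) -> in_sigma_span (elem g').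
Proof.
move=> fg fg' card_r span_g; set r := g :&: g'.
have [/andP[gD /eqP card_g] /andP[g'D /eqP card_g']] := (fg, fg').
have rD : r \in D by case: DP => complexD _ _ _ _; apply: complexD gD (subsetIl _ _).
have gg' : g != g'.
  by apply/eqP => eq_gg'; move: card_r; rewrite /r eq_gg' setIid card_g' => /esym/n_Sn.
set c := cobd D d.+1 (elem r).
have c_sqr h : is_facet d D h -> r \subset h -> c h * c h = 1.
  case/andP=> hD /eqP card_h rh.
  by rewrite /c -card_h elem_cobd_codim1_sqr // card_h card_r.
have c_out t : t != g -> t != g' -> c t = 0.
  move=> tg tg'; rewrite /c; have [rt|/elem_cobd_out->//] := boolP (r \subset t).
  rewrite /cobd; case: ifP => // ft; apply: contraTeq isT => _.
  have := ridge_two_cofaces fg fg' gg' rD card_r (subsetIl _ _) (subsetIr _ _) ft rt.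
  by rewrite (negbTE tg) (negbTE tg').
have c_sqr_g := c_sqr g fg (subsetIl _ _).
have c_sqr_g' := c_sqr g' fg' (subsetIr _ _).
(* [g'] = c g' * (c - c g [g]) since c = c g [g] + c g' [g'] and c g' ^ 2 = 1 *)
apply: (in_sigma_span_ext
  (in_sigma_span_lin (c g') (- (c g' * c g)) (in_sigma_span_cobd rD card_r) span_g)).
move=> t; have [->|tg'] := eqVneq t g'.
  by rewrite elem_id elem_neq 1?eq_sym // mulr0 addr0 c_sqr_g'.
have [->|tg] := eqVneq t g; first by rewrite elem_id mulr1 addrN elem_neq.
by rewrite -/c (c_out t) // !elem_neq // !mulr0 addr0.
Qed.

Lemma in_sigma_span_facet f :
  is_facet d D sigma -> is_facet d D f -> in_sigma_span (elem f).
Proof.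
case: DP => _ _ _ _ connected fsigma ff.
have [p [fp path_p <-]] := connected sigma f fsigma ff.
elim: p sigma fsigma in_sigma_span_sigma fp path_p => //= g p IH s fs span_s.
case/andP=> fg fp /andP[/eqP card_sg path_p].
exact: IH fg (in_sigma_span_adjacent fs fg card_sg span_s) fp path_p.
Qed.

Lemma in_sigma_span_facet_chain b :
  is_facet d D sigma -> is_chain D d.+1 b -> in_sigma_span b.
Proof.
move=> fsigma bD; apply: (in_sigma_span_ext _ (fun t => esym (chain_sum_elem b t))).
apply: in_sigma_span_sum => s /bD[sD card_s].
have fs : is_facet d D s by rewrite /is_facet sD card_s eqxx.
have span_s := in_sigma_span_facet fsigma fs.
apply: (in_sigma_span_ext (in_sigma_span_lin (b s) 0 span_s in_sigma_span_sigma)) => t.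
by rewrite mul0r addr0.
Qed.

End CyclicQuotient.

Theorem mainTheorem10 (n d : nat) (D : {set {set 'I_n}}) :
  (1 <= d)%N ->
  is_pseudomanifold d D ->
  reduced_homology_vanishes D d ->
  forall sigma : {set 'I_n}, is_facet d D sigma ->
  forall x : chain n, is_chain D d x -> (forall t, bd x t = 0) ->
  exists (m : int) (z : chain n),
    is_chain D d z /\
    forall t, x t = m * bd (elem sigma) t + bd (cobd D d.+1 z) t.
Proof.
move=> _ DP acyclic sigma fsigma x xD x_cycle.
have [b bD x_bd] := acyclic x xD x_cycle.
have [m [z [zD b_eq]]] := in_sigma_span_facet_chain DP fsigma bD.
exists m, z; split=> // t.
by rewrite -x_bd -bd_lin; apply: eq_bigr => v _; rewrite b_eq.
Qed.
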